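(* Let $\varepsilon>0$ and let $A$ be a real symmetric matrix with top eigenvector $u_1$ (a unit vector), whose two largest eigenvalues are $\lambda_1=1+2\varepsilon$ (with eigenvector $u_1$) and $\lambda_2=1$, and such that $|\lambda_i|\le 1$ for all $i\ge 2$. Let $w$ be a vector with $\langle u_1,w\rangle^2\le\varepsilon/2$ and $\langle u_1,Aw\rangle^2\le\varepsilon/2$. Then \[ \left\|A\left(I-ww^\top\right)\right\|_{\mathrm{op}} > (1+\varepsilon)\min_{\|u\|_2=1}\left\|A\left(I-uu^\top\right)\right\|_{\mathrm{op}}. \]
   Context: $\|\cdot\|_{\mathrm{op}}$ denotes the spectral norm. *)

From HB Require Import structures.
From mathcomp Require Import all_boot all_order all_algebra.
From mathcomp Require Import all_classical all_reals.
Set Implicit Arguments. Unset Strict Implicit. Unset Printing Implicit Defensive.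
Import Order.TTheory GRing.Theory Num.Theory.
Local Open Scope ring_scope.
Local Open Scope classical_set_scope.

Definition vnorm (R : realType) (n : nat) (x : 'cV[R]_n) : R :=
  Num.sqrt (\sum_i x i 0 ^+ 2).

Definition vdot (R : realType) (n : nat) (x y : 'cV[R]_n) : R :=
  (x^T *m y) 0 0.

Definition opnorm (R : realType) (m n : nat) (M : 'M[R]_(m, n)) : R :=
  sup [set vnorm (M *m x) | x in [set x : 'cV[R]_n | vnorm x = 1]].

(* min over unit vectors u of || A (I - u u^T) ||_op, taken as an infimum
   (the minimum is attained by compactness) *)
Definition min_deflation (R : realType) (n : nat) (A : 'M[R]_n) : R :=
  inf [set opnorm (A *m (1%:M - u *m u^T)) | u in [set u : 'cV[R]_n | vnorm u = 1]].

From HB Require Import structures.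
From mathcomp Require Import all_boot all_order all_algebra.
From mathcomp Require Import all_classical all_reals.
From mathcomp Require Import lra.
Import Order.TTheory GRing.Theory Num.Theory.
Local Open Scope ring_scope.
Local Open Scope classical_set_scope.

(* In the eigenbasis U, deflating A by its top eigenvector u1 leaves
   U diag(0, d_1, ..., d_{n+1}) U^T, whose operator norm is at most 1; so the
   minimum is at most 1.  On the other hand the Rayleigh quotient of A (I - w w^T)
   at u1 is lambda_1 - <w, u1> <u1, A w> >= 1 + 2 eps - (<u1, w>^2 + <u1, A w>^2) / 2
   >= 1 + 3 eps / 2, and it bounds the operator norm from below. *)

Section RealMatrices.
Context {R : realType}.
Implicit Types (m n : nat).

Lemma vdotE {n} (x y : 'cV[R]_n) : vdot x y = \sum_i x i 0 * y i 0.
Proof. by rewrite /vdot mxE; apply: eq_bigr => i _; rewrite mxE. Qed.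

Lemma vdotC {n} (x y : 'cV[R]_n) : vdot x y = vdot y x.
Proof. by rewrite !vdotE; apply: eq_bigr => i _; rewrite mulrC. Qed.

Lemma vdotZr {n} a (x y : 'cV[R]_n) : vdot x (a *: y) = a * vdot x y.
Proof. by rewrite /vdot -scalemxAr mxE. Qed.

Lemma vnormE {n} (x : 'cV[R]_n) : vnorm x = Num.sqrt (vdot x x).
Proof. by rewrite /vnorm vdotE; congr Num.sqrt; apply: eq_bigr => i _; rewrite expr2. Qed.

Lemma vnorm_ge0 {n} (x : 'cV[R]_n) : 0 <= vnorm x.
Proof. exact: sqrtr_ge0. Qed.

Lemma normr_coord_le_vnorm {n} (x : 'cV[R]_n) i : `|x i 0| <= vnorm x.
Proof.
have sum_ge0 P : 0 <= \sum_(j | P j) x j 0 ^+ 2 by apply: sumr_ge0 => j _; rewrite sqr_ge0.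
by rewrite /vnorm (bigD1 i) //= -sqrtr_sqr ler_sqrt ?addr_ge0 ?sqr_ge0 // lerDl.
Qed.

Lemma vnorm_orthogonal {m n} (Q : 'M[R]_(m, n)) (x : 'cV[R]_n) :
  Q^T *m Q = 1%:M -> vnorm (Q *m x) = vnorm x.
Proof. by move=> QtQ; rewrite !vnormE /vdot trmx_mul !mulmxA -(mulmxA _ Q^T) QtQ mulmx1. Qed.

Lemma vdot_col {m n} (Q : 'M[R]_(m, n)) i j : vdot (col i Q) (col j Q) = (Q^T *m Q) i j.
Proof. by rewrite vdotE mxE; apply: eq_bigr => k _; rewrite !mxE. Qed.

Lemma vdot_col_trmx {m n} (Q : 'M[R]_(m, n)) (v : 'cV[R]_m) i : vdot (col i Q) v = (Q^T *m v) i 0.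
Proof. by rewrite vdotE mxE; apply: eq_bigr => k _; rewrite !mxE. Qed.

Lemma vnorm_col {n} (Q : 'M[R]_n) i : Q^T *m Q = 1%:M -> vnorm (col i Q) = 1.
Proof. by move=> QtQ; rewrite vnormE vdot_col QtQ mxE eqxx sqrtr1. Qed.

Lemma normr_vdot_col_le {n} (Q : 'M[R]_n) (v : 'cV[R]_n) i :
  Q^T *m Q = 1%:M -> `|vdot (col i Q) v| <= vnorm v.
Proof.
move=> QtQ; have QQt : Q^T^T *m Q^T = 1%:M by rewrite trmxK; apply: mulmx1C.
by rewrite vdot_col_trmx -(vnorm_orthogonal Q^T v QQt) normr_coord_le_vnorm.
Qed.

Lemma vnorm_delta {n} (i : 'I_n) : vnorm (delta_mx i 0 : 'cV[R]_n) = 1.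
Proof. by rewrite vnormE /vdot trmx_delta mul_delta_mx mxE !eqxx sqrtr1. Qed.

Lemma vnorm_diag_mul_le {n} (d : 'rV[R]_n) (x : 'cV[R]_n) (c : R) :
  0 <= c -> (forall i, `|d 0 i| <= c) -> vnorm (diag_mx d *m x) <= c * vnorm x.
Proof.
move=> c_ge0 d_le; rewrite /vnorm -[c in c * _]ger0_norm // -sqrtr_sqr -sqrtrM ?sqr_ge0 //.
rewrite ler_sqrt ?mulr_ge0 ?sqr_ge0 ?sumr_ge0 // => [|i _]; last by rewrite sqr_ge0.
rewrite mulr_sumr; apply: ler_sum => i _; rewrite mul_diag_mx mxE exprMn ler_wpM2r ?sqr_ge0 //.
by rewrite -[d 0 i ^+ 2]real_normK ?num_real // lerXn2r ?nnegrE ?normr_ge0.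
Qed.

Lemma opnorm_has_ubound {m n} (M : 'M[R]_(m, n)) :
  has_ubound [set vnorm (M *m x) | x in [set x : 'cV[R]_n | vnorm x = 1]].
Proof.
exists (Num.sqrt (\sum_i (\sum_j `|M i j|) ^+ 2)) => _ [x /= x_unit <-].
rewrite /vnorm ler_sqrt; last by rewrite sumr_ge0 // => i _; rewrite sqr_ge0.
apply: ler_sum => i _; rewrite mxE -[leLHS]real_normK ?num_real //.
rewrite lerXn2r ?nnegrE ?normr_ge0 ?sumr_ge0 //.
apply: le_trans (ler_norm_sum _ _ _) _; apply: ler_sum => j _.
by rewrite normrM ler_piMr // -x_unit normr_coord_le_vnorm.
Qed.

Lemma vnorm_le_opnorm {m n} (M : 'M[R]_(m, n)) (x : 'cV[R]_n) :
  vnorm x = 1 -> vnorm (M *m x) <= opnorm M.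
Proof.
move=> x_unit; apply: sup_upper_bound; last by exists x.
by split; [exists (vnorm (M *m x)), x | exact: opnorm_has_ubound].
Qed.

Lemma opnorm_ge0 {m n} (M : 'M[R]_(m, n.+1)) : 0 <= opnorm M.
Proof. exact: le_trans (vnorm_ge0 _) (vnorm_le_opnorm M _ (vnorm_delta 0)). Qed.

Lemma opnorm_le {m n} (M : 'M[R]_(m, n.+1)) (c : R) :
  (forall x, vnorm x = 1 -> vnorm (M *m x) <= c) -> opnorm M <= c.
Proof.
move=> M_le; apply: ge_sup => [|_ [x /= x_unit <-]]; last exact: M_le.
by exists (vnorm (M *m delta_mx 0 0)), (delta_mx 0 0); rewrite //= vnorm_delta.
Qed.

Lemma opnorm_diag_conj_le {n} (U : 'M[R]_n.+1) (d : 'rV[R]_n.+1) (c : R) :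
  U^T *m U = 1%:M -> 0 <= c -> (forall i, `|d 0 i| <= c) ->
  opnorm (U *m diag_mx d *m U^T) <= c.
Proof.
move=> UtU c_ge0 d_le; have UUt : U^T^T *m U^T = 1%:M by rewrite trmxK; apply: mulmx1C.
apply: opnorm_le => x x_unit; rewrite -!mulmxA vnorm_orthogonal //.
apply: le_trans (vnorm_diag_mul_le _ _ _ c_ge0 d_le) _.
by rewrite vnorm_orthogonal // x_unit mulr1.
Qed.

Lemma min_deflation_le {n} (A : 'M[R]_n.+1) (u : 'cV[R]_n.+1) :
  vnorm u = 1 -> min_deflation A <= opnorm (A *m (1%:M - u *m u^T)).
Proof.
move=> u_unit; apply: ge_inf; last by exists u.
by exists 0 => _ [v _ <-]; exact: opnorm_ge0.
Qed.

Lemma diag_mx_mul_delta {n} (d : 'rV[R]_n) (i : 'I_n) :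
  diag_mx d *m delta_mx i 0 = d 0 i *: delta_mx i 0 :> 'cV[R]_n.
Proof.
by rewrite -[delta_mx i 0]trmxK trmx_delta -tr_diag_mx -trmx_mul -rowE row_diag_mx linearZ.
Qed.

Lemma diag_mx_delta {n} (i : 'I_n) : diag_mx (delta_mx 0 i) = delta_mx i i :> 'M[R]_n.
Proof.
apply/matrixP => j k; rewrite !mxE eqxx /=.
case: (j =P k) => [<-|jk]; first by rewrite mulr1n andbb.
by case: (j =P i) => [ji|//]; case: (k =P i) => [ki|//]; case: jk; rewrite ji ki.
Qed.

Section Spectral.
Variables (n : nat) (U : 'M[R]_n) (d : 'rV[R]_n).
Hypothesis UtU : U^T *m U = 1%:M.

Lemma mulmx_col_eigen i : U *m diag_mx d *m U^T *m col i U = d 0 i *: col i U.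
Proof. by rewrite colE -!mulmxA (mulmxA U^T) UtU mul1mx diag_mx_mul_delta -scalemxAr. Qed.

Lemma mulmx_deflate_col i :
  U *m diag_mx d *m U^T *m (1%:M - col i U *m (col i U)^T) =
  U *m diag_mx (d - d 0 i *: delta_mx 0 i) *m U^T.
Proof.
rewrite mulmxBr mulmx1 mulmxA mulmx_col_eigen linearB linearZ /= diag_mx_delta.
rewrite mulmxBr mulmxBl -scalemxAl -scalemxAr -scalemxAl colE trmx_mul trmx_delta.
by congr (_ - _ *: _); rewrite mulmxA -(mulmxA U) mul_delta_mx.
Qed.

End Spectral.

Lemma vdot_deflate {n} (A : 'M[R]_n) (u w : 'cV[R]_n) :
  vdot u (A *m (1%:M - w *m w^T) *m u) = vdot u (A *m u) - vdot w u * vdot u (A *m w).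
Proof.
rewrite -mulmxA mulmxBl mul1mx -mulmxA [w^T *m u]mx11_scalar mul_mx_scalar mulmxBr -scalemxAr.
by rewrite /vdot mulmxBr -scalemxAr !mxE.
Qed.

End RealMatrices.

Theorem lemma2p7 (R : realType) (n : nat) (eps : R) (A : 'M[R]_n.+2)
    (u1 w : 'cV[R]_n.+2) (U : 'M[R]_n.+2) (d : 'rV[R]_n.+2) :
  0 < eps ->
  A^T = A ->
  U^T *m U = 1%:M ->
  A = U *m diag_mx d *m U^T ->
  col 0 U = u1 ->
  d 0 0 = 1 + 2 * eps ->
  d 0 1 = 1 ->
  (forall i : 'I_n.+2, (0 < i)%N -> `|d 0 i| <= 1) ->
  vdot u1 w ^+ 2 <= eps / 2 ->
  vdot u1 (A *m w) ^+ 2 <= eps / 2 ->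
  opnorm (A *m (1%:M - w *m w^T)) > (1 + eps) * min_deflation A.
Proof.
move=> eps_gt0 _ UtU defA <- d00 _ d_le1 w_small Aw_small.
have u1_unit : vnorm (col 0 U) = 1 := vnorm_col U 0 UtU.
have min_le1 : min_deflation A <= 1.
  apply: le_trans (min_deflation_le A _ u1_unit) _.
  rewrite defA mulmx_deflate_col // opnorm_diag_conj_le // => i.
  rewrite !mxE; have [->|i_neq0] := eqVneq i 0; first by rewrite eqxx mulr1 subrr normr0.
  by rewrite mulr0 subr0 d_le1 // lt0n.
have opnorm_gt : 1 + eps < opnorm (A *m (1%:M - w *m w^T)).
  apply: lt_le_trans (le_trans (normr_vdot_col_le U _ 0 UtU) (vnorm_le_opnorm _ _ u1_unit)).
  rewrite vdot_deflate defA mulmx_col_eigen // -defA vdotZr vdot_col UtU mxE eqxx mulr1 d00 vdotC.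
  apply: lt_le_trans (ler_norm _).
  have := sqr_ge0 (vdot (col 0 U) w + vdot (col 0 U) (A *m w)); nra.
apply: le_lt_trans opnorm_gt; rewrite -[leRHS]mulr1 ler_wpM2l //; lra.
Qed.
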